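(* Let $m=pq$ with $p,q$ distinct primes, let $(K_n,\alpha)$ be an edge-labeled complete graph over $\mathbb{Z}/m\mathbb{Z}$ on $v_1,\dots,v_n$ (every edge labeled by $\langle p\rangle$ or $\langle q\rangle$), and let $(K_{n+1},\alpha)$ be obtained by adding a vertex $v_{n+1}$ joined to each of $v_1,\dots,v_n$ (the star $S_n$), keeping the labels on the edges of $K_n$ and labeling the new edges $v_jv_{n+1}$ by $\langle p\rangle$ or $\langle q\rangle$. Suppose that $[\mathbb{Z}/m\mathbb{Z}]_{(K_n,\alpha)}$ has a minimum generating set consisting of the trivial spline $(1,\dots,1)$ and $i-1$ other flow-up splines (for some $1<i\le n$), each of whose entries lies in the ideal $\langle p\rangle$. Then: (a) if all edge labels of the added star $S_n$ are contained in $\langle p\rangle$, then $\operatorname{rk}[\mathbb{Z}/m\mathbb{Z}]_{(K_{n+1},\alpha)}=\operatorname{rk}[\mathbb{Z}/m\mathbb{Z}]_{(K_n,\alpha)}+1$; (b) if exactly one edge label of the added star $S_n$ is contained in $\langle q\rangle$ and the others are contained in $\langle p\rangle$, then $\operatorname{rk}[\mathbb{Z}/m\mathbb{Z}]_{(K_{n+1},\alpha)}=\operatorname{rk}[\mathbb{Z}/m\mathbb{Z}]_{(K_n,\alpha)}$.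
   Context: Edges are labeled by nonzero proper ideals of $\mathbb{Z}/m\mathbb{Z}$. A spline on an edge-labeled graph $(G,\alpha)$ over $\mathbb{Z}/m\mathbb{Z}$ is a vector $(f_{v_1},\dots,f_{v_n})\in(\mathbb{Z}/m\mathbb{Z})^n$ with $f_{v_i}-f_{v_j}\in\alpha(v_iv_j)$ for every edge; the splines form a $\mathbb{Z}$-module $[\mathbb{Z}/m\mathbb{Z}]_{(G,\alpha)}$. An $i$-th flow-up class (flow-up spline) is a spline with $f_{v_i}\ne0$ and $f_{v_t}=0$ for $t<i$. A minimum generating set is a generating set of the $\mathbb{Z}$-module of smallest possible size; that size is the rank $\operatorname{rk}$. *)

From HB Require Import structures.
From mathcomp Require Import all_boot all_order all_algebra.
From Stdlib Require Import ClassicalEpsilon.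
Set Implicit Arguments. Unset Strict Implicit. Unset Printing Implicit Defensive.
Import Order.TTheory GRing.Theory Num.Theory.
Local Open Scope ring_scope.

Definition ideal (m d : nat) : {set 'Z_m} := [set d%:R * y | y : 'Z_m].

(* An edge labeling of the complete graph K_n on the vertices 'I_n:
   lab i j is the ideal labeling the edge v_i v_j (i != j). *)
Definition labeling (n m : nat) := 'I_n -> 'I_n -> {set 'Z_m}.

Definition vec (n m : nat) := {ffun 'I_n -> 'Z_m}.

Definition splines (n m : nat) (lab : labeling n m) : {set vec n m} :=
  [set f : vec n m | [forall i : 'I_n, forall j : 'I_n,
      (i != j) ==> (f i - f j \in lab i j)]].

Definition generates (n m : nat) (S : {set vec n m}) (gs : seq (vec n m)) : Prop :=
  (forall g, g \in gs -> g \in S) /\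
  (forall f, f \in S -> exists c : 'I_(size gs) -> int,
       f = \sum_(k < size gs) (nth 0 gs k) *~ c k).

Definition min_generating (n m : nat) (S : {set vec n m}) (gs : seq (vec n m)) : Prop :=
  generates S gs /\ forall gs', generates S gs' -> (size gs <= size gs')%N.

Lemma generates_exists (n m : nat) (S : {set vec n m}) :
  exists r : nat, (fun r => if excluded_middle_informative
     (exists gs, size gs = r /\ generates S gs) then true else false) r.
Proof.
exists (size (enum S)).
case: excluded_middle_informative => // [[]]; exists (enum S); split => //.
split=> [g|f fS]; first by rewrite mem_enum.
have fe : f \in enum S by rewrite mem_enum.
have ilt : (index f (enum S) < size (enum S))%N by rewrite index_mem.
exists (fun k => ((k : nat) == index f (enum S))%:Z).
rewrite (bigD1 (Ordinal ilt)) //= eqxx nth_index // big1 ?addr0 //.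
by move=> k /negbTE; rewrite -val_eqE /= => ->; rewrite mulr0z.
Qed.

Definition rk (n m : nat) (S : {set vec n m}) : nat := ex_minn (generates_exists S).

Definition ones (n m : nat) : vec n m := [ffun => 1].

(* f is an i-th flow-up class (0-based index i). *)
Definition flow_up (n m : nat) (f : vec n m) (i : 'I_n) : Prop :=
  f i != 0 /\ forall t : 'I_n, (t < i)%N -> f t = 0.

(* For m = pq the vectors p x, x in (Z/mZ)^n, form an F_q-vector space, and
   p g_1, ..., p g_r span p S whenever g_1, ..., g_r generate a module S of
   splines.  So splines x_1, ..., x_r whose multiples p x_k are F_q-independent
   force rk S >= r, with equality when they generate S.
   The minimum generating set 1, g_1, ..., g_(i-1) on K_n has independent
   p-multiples: in a dependency where p g_k has a coefficient invertible mod q,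
   rescaling makes that coefficient act as 1 on g_k (q kills g_k, whose values
   lie in <p>), so g_k would be redundant.  It also follows that all differences
   of a spline on K_n lie in <p>.
   Copying to v_(n+1) the value at a fixed vertex turns these generators into
   splines on K_(n+1) with independent p-multiples.  In case (a) adding
   (0, ..., 0, p) yields a generating set, as f(v_(n+1)) - f(v_1) lies in <p>;
   in case (b) nothing is missing: if v_j is the end of the <q>-edge, then
   f(v_(n+1)) - f(v_j) lies in <q> and, through any other vertex, in <p>,
   so it is 0. *)

From HB Require Import structures.
From mathcomp Require Import all_boot all_order all_algebra.
From mathcomp Require Import ring zify.
From Stdlib Require Import ClassicalEpsilon.

Set Implicit Arguments.
Unset Strict Implicit.
Unset Printing Implicit Defensive.
Import GRing.Theory.
Local Open Scope ring_scope.

Section Ideals.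

Variable m : nat.

Lemma idealP d x : reflect (exists y, x = d%:R * y) (x \in ideal m d).
Proof. by apply: (iffP imsetP) => [[y _ ->]|[y ->]]; exists y. Qed.

Lemma ideal0 d : 0 \in ideal m d.
Proof. by apply/idealP; exists 0; rewrite mulr0. Qed.

Lemma idealD d x y : x \in ideal m d -> y \in ideal m d -> x + y \in ideal m d.
Proof. by move=> /idealP[a ->] /idealP[b ->]; apply/idealP; exists (a + b); rewrite mulrDr. Qed.

Lemma idealN d x : x \in ideal m d -> - x \in ideal m d.
Proof. by move=> /idealP[a ->]; apply/idealP; exists (- a); rewrite mulrN. Qed.

Lemma idealB d x y : x \in ideal m d -> y \in ideal m d -> x - y \in ideal m d.
Proof. by move=> xd yd; rewrite idealD ?idealN. Qed.

Lemma idealMz d x z : x \in ideal m d -> x *~ z \in ideal m d.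
Proof. by move=> /idealP[a ->]; apply/idealP; exists (a *~ z); rewrite mulrzAr. Qed.

Lemma ideal_sum d I (r : seq I) (F : I -> 'Z_m) :
  (forall k, F k \in ideal m d) -> \sum_(k <- r) F k \in ideal m d.
Proof. by move=> Fd; elim/big_ind: _ => //; [apply: ideal0 | apply: idealD]. Qed.

Lemma mem_ideal d x : (1 < m)%N -> (d %| m)%N -> (x \in ideal m d) = (d %| x)%N.
Proof.
move=> m_gt1 dm; apply/idealP/idP => [[y ->]|/dvdnP[k xE]].
  by rewrite -[y]natr_Zp -natrM val_Zp_nat // /dvdn modn_dvdm // modnMr.
by exists k%:R; rewrite -natrM mulnC -xE natr_Zp.
Qed.

Lemma ideal_subset_dvd d d' : (1 < m)%N -> (d %| m)%N -> (d' %| m)%N -> (d < m)%N ->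
  ideal m d \subset ideal m d' -> (d' %| d)%N.
Proof.
move=> m_gt1 dm d'm d_lt /subsetP/(_ d%:R).
by rewrite !mem_ideal // val_Zp_nat // modn_small // dvdnn; apply.
Qed.

Lemma ideal_subset_prime d d' : (1 < m)%N -> prime d -> prime d' ->
    (d %| m)%N -> (d' %| m)%N -> (d < m)%N ->
  ideal m d \subset ideal m d' -> d = d'.
Proof.
move=> m_gt1 d_pr d'_pr dm d'm d_lt /(ideal_subset_dvd m_gt1 dm d'm d_lt).
by rewrite dvdn_prime2 // eq_sym => /eqP.
Qed.

End Ideals.

Definition in_span (V : zmodType) (xs : seq V) (f : V) :=
  exists c : nat -> int, f = \sum_(k < size xs) xs`_k *~ c k.

Section LinearCombinations.

Variable V : zmodType.
Implicit Types (xs gs : seq V) (f : V).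

Lemma lincomb_cons x xs (d : nat -> int) :
  \sum_(k < size (x :: xs)) (x :: xs)`_k *~ d k =
  x *~ d 0%N + \sum_(k < size xs) xs`_k *~ d k.+1.
Proof. by rewrite big_ord_recl. Qed.

Lemma raddf_lincomb (W : zmodType) (g : {additive V -> W}) xs (d : nat -> int) :
  g (\sum_(k < size xs) xs`_k *~ d k) =
  \sum_(k < size (map g xs)) (map g xs)`_k *~ d k.
Proof.
by rewrite raddf_sum size_map; apply: eq_bigr => k _; rewrite raddfMz (nth_map 0).
Qed.

Lemma in_span_raddf (W : zmodType) (g : {additive V -> W}) xs f :
  in_span xs f -> in_span (map g xs) (g f).
Proof. by move=> [c ->]; exists c; rewrite raddf_lincomb. Qed.

Lemma in_span_lincomb gs xs (h : 'I_(size xs) -> int) :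
  {in xs, forall x, in_span gs x} -> in_span gs (\sum_(k < size xs) xs`_k *~ h k).
Proof.
move=> xs_span; have /fin_all_exists[c cE] : forall k : 'I_(size xs),
    exists c : nat -> int, xs`_k = \sum_(l < size gs) gs`_l *~ c l.
  by move=> k; apply: xs_span; rewrite mem_nth.
exists (fun l => \sum_(k < size xs) c k l * h k).
under [RHS]eq_bigr do rewrite mulrz_sumr; rewrite exchange_big /=.
by apply: eq_bigr => k _; rewrite cE mulrz_suml; apply: eq_bigr => l _; rewrite mulrzA.
Qed.

Lemma in_span_cons x xs z f : in_span xs (f - x *~ z) -> in_span (x :: xs) f.
Proof.
move=> [c fE]; pose cz k := if k is k'.+1 then c k' else z.
by exists cz; rewrite lincomb_cons /cz -fE addrC subrK.
Qed.

End LinearCombinations.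

Section Span.

Variables n m : nat.
Implicit Types (S : {set vec n m}) (xs gs : seq (vec n m)) (f : vec n m).

Lemma generatesP S gs :
  generates S gs <-> {subset gs <= S} /\ forall f, f \in S -> in_span gs f.
Proof.
split=> -[gsS gs_span]; split=> // f /gs_span[c ->]; last by exists (fun k => c k).
by exists (fun k => oapp c 0 (insub k)); apply: eq_bigr => k _; rewrite valK.
Qed.

Lemma generates_drop S xs (j : 'I_(size xs)) (e : 'I_(size xs).-1 -> int) :
  generates S xs -> xs`_j = \sum_(k < (size xs).-1) xs`_(lift j k) *~ e k ->
  generates S (mkseq (fun k => xs`_(bump j k)) (size xs).-1).
Proof.
move=> [xsS xs_span] xjE; split.
  move=> g /mapP[k]; rewrite mem_iota add0n => /andP[_ k_lt] ->; apply/xsS/mem_nth.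
  rewrite /bump; case: (j <= k)%N; rewrite ?add1n ?add0n; last exact: leq_trans k_lt (leq_pred _).
  by move: k_lt; case: (size xs).
move=> f /xs_span[c ->]; rewrite size_mkseq.
exists (fun k => e k * c j + c (lift j k)).
rewrite (bigD1_ord j) //= xjE mulrz_suml -big_split /=.
by apply: eq_bigr => k _; rewrite nth_mkseq // mulrzDr mulrzA.
Qed.

Lemma min_generating_unit_relation S xs (c : 'I_(size xs) -> int) (j : 'I_(size xs)) :
  min_generating S xs -> \sum_(k < size xs) xs`_k *~ c k = 0 ->
  xs`_j *~ c j <> xs`_j.
Proof.
move=> [xs_gen xs_min] rel cjE.
suff /xs_min : generates S (mkseq (fun k => xs`_(bump j k)) (size xs).-1).
  by rewrite size_mkseq => le; have := ltn_ord j; lia.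
apply: (@generates_drop S xs j (fun k => - c (lift j k))) => //.
move: rel; rewrite (bigD1_ord j) //= cjE => /eqP; rewrite addr_eq0 => /eqP ->.
by rewrite -sumrN; apply: eq_bigr => k _; rewrite mulrNz.
Qed.

Lemma rk_le S gs : generates S gs -> (rk S <= size gs)%N.
Proof.
move=> gs_gen; rewrite /rk; case: ex_minnP => r _; apply.
by case: excluded_middle_informative => // -[]; exists gs.
Qed.

Lemma rk_ge S k : (forall gs, generates S gs -> (k <= size gs)%N) -> (k <= rk S)%N.
Proof.
move=> size_ge; rewrite /rk; case: ex_minnP => r + _.
by case: excluded_middle_informative => // -[gs [gsE gs_gen]] _; rewrite -gsE size_ge.
Qed.

End Span.

Lemma splinesP n m (lab : labeling n m) (f : vec n m) :
  reflect (forall a b, a != b -> f a - f b \in lab a b) (f \in splines lab).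
Proof.
rewrite inE; apply: (iffP forallP) => [fS a b ab | fS a].
  by move/forallP/(_ b)/implyP: (fS a); apply.
by apply/forallP => b; apply/implyP; apply: fS.
Qed.

Lemma generates_ones_diff_ideal n m (S : {set vec n m}) gens d f a b :
    generates S (ones n m :: gens) -> (forall g, g \in gens -> forall v, g v \in ideal m d) ->
  f \in S -> f a - f b \in ideal m d.
Proof.
move=> [_ span] gens_d /span[c ->]; rewrite !sum_ffunE -sumrB; apply: ideal_sum => k.
rewrite !ffunMzE -mulrzBl; apply: idealMz.
case: (unliftP ord0 k) => [j ->|->] /=; last by rewrite !ffunE subrr ideal0.
by rewrite add0n idealB ?gens_d ?mem_nth.
Qed.

Section Extension.

Variables n m : nat.
Local Notation widen := (widen_ord (leqnSn n)).

Lemma widen_lift (j : 'I_n) : widen j = lift ord_max j.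
Proof. by apply: val_inj; rewrite [RHS]lift_max. Qed.

Lemma widen_or_max (v : 'I_n.+1) : (exists j, v = widen j) \/ v = ord_max.
Proof.
case: (unliftP ord_max v) => [j ->|->]; last by right.
by left; exists j; rewrite widen_lift.
Qed.

Lemma widen_neq_max (j : 'I_n) : widen j != ord_max.
Proof. by rewrite -(inj_eq val_inj) /= neq_ltn ltn_ord. Qed.

Lemma eq_widen (a b : 'I_n) : (widen a == widen b) = (a == b).
Proof. by rewrite -!(inj_eq val_inj). Qed.

Definition restrict (F : vec n.+1 m) : vec n m := [ffun j => F (widen j)].

Definition extend (c : 'I_n) (f : vec n m) : vec n.+1 m :=
  [ffun v => if unlift ord_max v is Some j then f j else f c].

Lemma restrict_is_zmod_morphism : zmod_morphism restrict.
Proof. by move=> F G; apply/ffunP => j; rewrite !ffunE. Qed.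

HB.instance Definition _ :=
  GRing.isZmodMorphism.Build (vec n.+1 m) (vec n m) restrict restrict_is_zmod_morphism.

Lemma extend_is_zmod_morphism c : zmod_morphism (extend c).
Proof. by move=> f g; apply/ffunP => v; rewrite !ffunE; case: unlift => [j|]; rewrite ?ffunE. Qed.

HB.instance Definition _ c :=
  GRing.isZmodMorphism.Build (vec n m) (vec n.+1 m) (extend c) (extend_is_zmod_morphism c).

Definition delta_last (x : 'Z_m) : vec n.+1 m :=
  [ffun v => if v == ord_max then x else 0].

Lemma extend_widen c f j : extend c f (widen j) = f j.
Proof. by rewrite ffunE widen_lift liftK. Qed.

Lemma extend_max c f : extend c f ord_max = f c.
Proof. by rewrite ffunE unlift_none. Qed.

Lemma delta_last_widen x j : delta_last x (widen j) = 0.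
Proof. by rewrite ffunE (negbTE (widen_neq_max j)). Qed.

Lemma delta_last_max x : delta_last x ord_max = x.
Proof. by rewrite ffunE eqxx. Qed.

Lemma delta_last0 : delta_last 0 = 0.
Proof. by apply/ffunP => v; rewrite !ffunE if_same. Qed.

Lemma delta_lastMz x z : delta_last x *~ z = delta_last (x *~ z).
Proof. by apply/ffunP => v; rewrite ffunMzE !ffunE; case: eqP; rewrite ?mul0rz. Qed.

Lemma extend_restrict c F :
  F = extend c (restrict F) + delta_last (F ord_max - F (widen c)).
Proof.
apply/ffunP => v; rewrite ffunE.
have [[j ->]|->] := widen_or_max v; first by rewrite extend_widen delta_last_widen ffunE addr0.
by rewrite extend_max delta_last_max ffunE addrC subrK.
Qed.

Lemma restrict_extend c f : restrict (extend c f) = f.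
Proof. by apply/ffunP => j; rewrite ffunE extend_widen. Qed.

Lemma restrict_delta_last x : restrict (delta_last x) = 0.
Proof. by apply/ffunP => j; rewrite !ffunE (negbTE (widen_neq_max j)). Qed.

Section Splines.

Variables (alpha : labeling n m) (beta : labeling n.+1 m).
Hypotheses (beta_widen : forall a b, beta (widen a) (widen b) = alpha a b)
  (beta_sym : forall a b, beta a b = beta b a)
  (alpha_ideal : forall a b, a != b -> exists d, alpha a b = ideal m d)
  (star_ideal : forall j, exists d, beta (widen j) ord_max = ideal m d).

Lemma restrict_spline F : F \in splines beta -> restrict F \in splines alpha.
Proof.
move=> /splinesP FS; apply/splinesP => a b ab; rewrite !ffunE -beta_widen.
by apply: FS; rewrite eq_widen.
Qed.

Lemma spline_star_edge F j :
  F \in splines beta -> F ord_max - F (widen j) \in beta (widen j) ord_max.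
Proof. by move=> /splinesP FS; rewrite beta_sym FS // eq_sym widen_neq_max. Qed.

Lemma extend_spline c f : f \in splines alpha ->
    (forall j, f j - f c \in beta (widen j) ord_max) ->
  extend c f \in splines beta.
Proof.
move=> /splinesP fS f_star; apply/splinesP => a b.
have [[a' ->]|->] := widen_or_max a; have [[b' ->]|->] := widen_or_max b => ab.
- by rewrite !extend_widen beta_widen; apply: fS; move: ab; rewrite eq_widen.
- by rewrite extend_widen extend_max.
- rewrite extend_widen extend_max beta_sym -opprB.
  by have [d dE] := star_ideal b'; move: (f_star b'); rewrite dE; apply: idealN.
- by rewrite eqxx in ab.
Qed.

Lemma delta_last_spline x : (forall j, x \in beta (widen j) ord_max) ->
  delta_last x \in splines beta.
Proof.
move=> x_star; apply/splinesP => a b.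
have [[a' ->]|->] := widen_or_max a; have [[b' ->]|->] := widen_or_max b => ab.
- have a'b' : a' != b' by move: ab; rewrite eq_widen.
  by rewrite !delta_last_widen subrr beta_widen; have [d ->] := alpha_ideal a'b'; apply: ideal0.
- by rewrite delta_last_widen delta_last_max sub0r; have [d dE] := star_ideal a';
    move: (x_star a'); rewrite dE; apply: idealN.
- by rewrite delta_last_widen delta_last_max subr0 beta_sym.
- by rewrite eqxx in ab.
Qed.

End Splines.

End Extension.

Arguments restrict {n m} F.
Arguments extend {n m} c f.
Arguments delta_last {n m} x.

Lemma intr_Zp_eq0 m (z : int) : (1 < m)%N -> ((z%:~R : 'Z_m) == 0) = (m%:Z %| z)%Z.
Proof.
move=> m_gt1; case: z => k; last rewrite NegzE mulrNz oppr_eq0.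
  all: by rewrite -pmulrn -(inj_eq val_inj) /= val_Zp_nat.
Qed.

Lemma mulrz_Zp_eq0 m (x : 'Z_m) (z : int) : (1 < m)%N -> (m%:Z %| z)%Z -> x *~ z = 0.
Proof.
move=> m_gt1 mz; have /eqP z0 : (z%:~R : 'Z_m) == 0 by rewrite intr_Zp_eq0.
by rewrite -mulrzr z0 mulr0.
Qed.

Lemma vec_mulrz_Zp_eq0 n m (f : vec n m) (z : int) : (1 < m)%N -> (m%:Z %| z)%Z -> f *~ z = 0.
Proof. by move=> m_gt1 mz; apply/ffunP => v; rewrite ffunMzE mulrz_Zp_eq0 ?ffunE. Qed.

Section ModPQ.

Variables p q : nat.
Hypotheses (p_prime : prime p) (q_prime : prime q) (p_neq_q : p != q).
Local Notation m := (p * q)%N.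

Lemma pq_gt1 : (1 < m)%N.
Proof. by rewrite (leq_trans (prime_gt1 p_prime)) // leq_pmulr // prime_gt0. Qed.

Lemma coprime_pq : coprime p q.
Proof. by rewrite prime_coprime // dvdn_prime2. Qed.

Lemma intr_pM_eq0 (z : int) : (((p%:Z * z)%:~R : 'Z_m) == 0) = (q%:Z %| z)%Z.
Proof.
by rewrite intr_Zp_eq0 ?pq_gt1 // PoszM dvdz_mul2l // eqz_nat -lt0n prime_gt0.
Qed.

Lemma ideal_mulrz_eq0 (x : 'Z_m) (z : int) :
  x \in ideal m p -> (q%:Z %| z)%Z -> x *~ z = 0.
Proof.
move=> /idealP[y ->]; rewrite -intr_pM_eq0 intrM mulrzr => /eqP pz0.
by rewrite mulrC -mulrzAr pz0 mulr0.
Qed.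

Lemma ideal_mulrz_id (x : 'Z_m) (w : int) :
  x \in ideal m p -> (q%:Z %| w - 1)%Z -> x *~ w = x.
Proof.
move=> xp /(ideal_mulrz_eq0 xp); rewrite mulrzBr mulr1z => /eqP.
by rewrite subr_eq0 => /eqP.
Qed.

Lemma idealI_pq (x : 'Z_m) : x \in ideal m p -> x \in ideal m q -> x = 0.
Proof.
rewrite !mem_ideal ?pq_gt1 ?(dvdn_mulr _ (dvdnn p)) ?(dvdn_mull _ (dvdnn q)) // => px qx.
have : (m %| x)%N by rewrite Gauss_dvd ?coprime_pq ?px.
have x_lt : (x < m)%N by rewrite -[X in (_ < X)%N](Zp_cast pq_gt1).
by rewrite /dvdn modn_small // => /eqP x0; apply: val_inj.
Qed.

Lemma label_subset_ideal (L : {set 'Z_m}) d : d \in [:: p; q] ->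
  L = ideal m p \/ L = ideal m q -> L \subset ideal m d -> L = ideal m d.
Proof.
have pq_facts e : e \in [:: p; q] -> [/\ prime e, (e %| m)%N & (e < m)%N].
  rewrite !inE => /orP[]/eqP->.
    by rewrite dvdn_mulr ?ltn_Pmulr ?prime_gt1 ?prime_gt0.
  by rewrite dvdn_mull ?ltn_Pmull ?prime_gt1 ?prime_gt0.
move=> /pq_facts[d_pr dm d_lt] LE; have [e e_pq ->] : exists2 e, e \in [:: p; q] & L = ideal m e.
  by case: LE => ->; [exists p | exists q]; rewrite // !inE eqxx ?orbT.
have [e_pr em e_lt] := pq_facts e e_pq.
by move/(ideal_subset_prime pq_gt1 e_pr d_pr em dm e_lt) => ->.
Qed.

Lemma bezout_modq (d : int) : ~~ (q%:Z %| d)%Z -> exists u : int, (q%:Z %| u * (p%:Z * d) - 1)%Z.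
Proof.
move=> q_ndvd_d; have : coprimez (p%:Z * d) q.
  by rewrite coprimezMl !coprimezE /= coprime_pq coprime_sym prime_coprime.
case/coprimezP => -[u v] /= uvE; exists u.
by rewrite (_ : _ - 1 = - v * q%:Z) ?dvdz_mull // -uvE; ring.
Qed.

Lemma vec_mulrz_p_modq n (f : vec n m) (c : int) :
  f *~ (p%:Z * c) = f *~ (p%:Z * (c %% q)%Z).
Proof.
rewrite {1}(divz_eq c q) mulrDr mulrzDr vec_mulrz_Zp_eq0 ?pq_gt1 ?add0r //.
by rewrite PoszM mulrCA dvdz_mull // mulrC dvdzz.
Qed.

Lemma modz_prime_lt (c : int) : (`|(c %% q)%Z| < q)%N.
Proof.
have q_gt0 : (0 < q)%N := prime_gt0 q_prime.
by rewrite -ltz_nat gez0_abs ?modz_ge0 ?ltz_pmod // eqz_nat -lt0n.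
Qed.

Lemma dvdz_small_eq (a b : nat) : (a < q)%N -> (b < q)%N -> (q%:Z %| a%:Z - b%:Z)%Z -> a = b.
Proof. by move=> a_lt b_lt; rewrite -eqz_mod_dvd !modz_nat !modn_small // => /eqP[]. Qed.

(* [pfree xs]: the vectors [p x], for [x] in [xs], are linearly independent in the
   F_q-vector space [p (Z/pqZ)^n]. *)
Definition pfree n (xs : seq (vec n m)) := forall d : nat -> int,
  \sum_(k < size xs) xs`_k *~ (p%:Z * d k) = 0 ->
  forall k, (k < size xs)%N -> (q%:Z %| d k)%Z.

Section Counting.

Variables (n : nat) (S : {set vec n m}).

Definition pcomb (xs : seq (vec n m)) (h : {ffun 'I_(size xs) -> 'I_q}) :=
  \sum_(k < size xs) xs`_k *~ (p%:Z * (h k)%:Z).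
Arguments pcomb : clear implicits.

Lemma pcomb_inj xs : pfree xs -> injective (pcomb xs).
Proof.
move=> xs_free h1 h2 eq12; apply/ffunP => k; apply/val_inj.
pose d l := oapp (fun l => (h1 l)%:Z - (h2 l)%:Z) 0 (insub l).
have dE (l : 'I_(size xs)) : d l = (h1 l)%:Z - (h2 l)%:Z by rewrite /d valK.
have /xs_free/(_ k (ltn_ord k)) : \sum_(l < size xs) xs`_l *~ (p%:Z * d l) = 0.
  under eq_bigr do rewrite dE mulrBr mulrzBr.
  by rewrite sumrB; apply/eqP; rewrite subr_eq0; apply/eqP.
by rewrite dE; apply: dvdz_small_eq.
Qed.

Lemma pcomb_span gs xs h : {in xs, forall x, in_span gs x} -> exists h', pcomb xs h = pcomb gs h'.
Proof.
move=> xs_span; have [c cE] := in_span_lincomb (fun k => (h k)%:Z) xs_span.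
exists [ffun l : 'I_(size gs) => Ordinal (modz_prime_lt (c l))].
have -> : pcomb xs h = (\sum_(k < size xs) xs`_k *~ (h k)%:Z) *~ p%:Z.
  by rewrite mulrz_suml; apply: eq_bigr => k _; rewrite -mulrzA mulrC.
rewrite cE mulrz_suml; apply: eq_bigr => l _.
rewrite -mulrzA mulrC [LHS]vec_mulrz_p_modq ffunE /= gez0_abs ?modz_ge0 //.
by rewrite eqz_nat -lt0n prime_gt0.
Qed.

Lemma pfree_size_le gs xs : generates S gs -> {subset xs <= S} -> pfree xs ->
  (size xs <= size gs)%N.
Proof.
move=> /generatesP[_ gs_span] xsS xs_free.
have : (#|pcomb xs @: setT| <= #|pcomb gs @: setT|)%N.
  apply/subset_leq_card/subsetP => _ /imsetP[h _ ->].
  have [h' ->] := pcomb_span h (fun x xin => gs_span x (xsS x xin)).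
  by rewrite imset_f.
move=> /leq_trans/(_ (leq_imset_card _ _)).
by rewrite (card_imset _ (pcomb_inj xs_free)) !cardsT !card_ffun !card_ord leq_exp2l ?prime_gt1.
Qed.

Lemma rk_pfree xs : generates S xs -> pfree xs -> rk S = size xs.
Proof.
move=> xs_gen xs_free; apply/eqP; rewrite eqn_leq rk_le //=.
by apply: rk_ge => gs /pfree_size_le; apply => //; case: xs_gen.
Qed.

End Counting.

Lemma pfree_min_generating n (S : {set vec n m}) (gens : seq (vec n m)) : (0 < n)%N ->
    min_generating S (ones n m :: gens) ->
    (forall g, g \in gens -> forall v, g v \in ideal m p) ->
  pfree (ones n m :: gens).
Proof.
move=> n_gt0 mingen gens_p d rel.
have gens_q j : (j < size gens)%N -> (q%:Z %| d j.+1)%Z.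
  move=> j_lt; apply/negPn/negP => /bezout_modq[u u_inv].
  apply: (@min_generating_unit_relation _ _ S (ones n m :: gens)
    (fun k => u * (p%:Z * d k)) (lift ord0 (Ordinal j_lt)) mingen).
    transitivity ((\sum_(k < size (ones n m :: gens))
      (ones n m :: gens)`_k *~ (p%:Z * d k)) *~ u); last by rewrite rel mul0rz.
    by rewrite mulrz_suml; apply: eq_bigr => k _ /=; rewrite -[RHS]mulrzA mulrC.
  apply/ffunP => v; rewrite ffunMzE /= add0n.
  by apply: ideal_mulrz_id u_inv; apply/gens_p/mem_nth.
have ones_rel : ones n m *~ (p%:Z * d 0%N) = 0.
  rewrite -[RHS]rel (lincomb_cons _ _ (fun k => p%:Z * d k)) big1 ?addr0 // => k _.
  apply: vec_mulrz_Zp_eq0; rewrite ?pq_gt1 // PoszM dvdz_mul2l ?gens_q //.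
  by rewrite eqz_nat -lt0n prime_gt0.
case=> [|k]; last exact: gens_q.
have /eqP := congr1 (fun f : vec n m => f (Ordinal n_gt0)) ones_rel.
by rewrite ffunMzE !ffunE intr_pM_eq0.
Qed.

Lemma pfree_map_extend n (c : 'I_n) xs : pfree xs -> pfree (map (extend c) xs).
Proof.
move=> xs_free d rel; rewrite size_map => k k_lt; apply: xs_free k_lt.
have := congr1 restrict rel.
by rewrite raddf0 (raddf_lincomb _ _ (fun k => p%:Z * d k)) (mapK (restrict_extend c)).
Qed.

Lemma pfree_delta_last_cons n (c : 'I_n) xs :
  pfree xs -> pfree (delta_last p%:R :: map (extend c) xs).
Proof.
move=> xs_free d rel.
have old_q : forall k, (k < size xs)%N -> (q%:Z %| d k.+1)%Z.
  apply: xs_free; have := congr1 restrict rel.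
  rewrite raddf0 (raddf_lincomb _ _ (fun k => p%:Z * d k)) /= (mapK (restrict_extend c)).
  by rewrite restrict_delta_last (lincomb_cons _ _ (fun k => p%:Z * d k)) mul0rz add0r.
case=> [_|k]; last by rewrite /= size_map; apply: old_q.
have := congr1 (fun F : vec n.+1 m => F ord_max) rel.
rewrite (lincomb_cons _ _ (fun k => p%:Z * d k)) ffunE sum_ffunE big1.
  rewrite ffunMzE delta_last_max ffunE addr0 => /eqP.
  have -> : (p%:R : 'Z_m) *~ (p%:Z * d 0%N) = (p%:Z * (p%:Z * d 0%N))%:~R.
    by rewrite intrM mulrzr.
  by rewrite intr_pM_eq0 Gauss_dvdzr // coprimezE /= coprime_sym coprime_pq.
move=> k _; have k_lt : (k < size xs)%N by rewrite -(size_map (extend c)).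
rewrite ffunMzE (nth_map 0) // (extend_max c) mulrz_Zp_eq0 ?pq_gt1 //.
by rewrite PoszM dvdz_mul2l ?old_q // eqz_nat -lt0n prime_gt0.
Qed.

Section Star.

Variables (n : nat) (alpha : labeling n m) (beta : labeling n.+1 m) (xs : seq (vec n m)).
Local Notation widen := (widen_ord (leqnSn n)).
Hypotheses (beta_widen : forall a b, beta (widen a) (widen b) = alpha a b)
  (beta_sym : forall a b, beta a b = beta b a)
  (alpha_pq : forall a b, a != b -> alpha a b = ideal m p \/ alpha a b = ideal m q)
  (star_pq : forall j, beta (widen j) ord_max = ideal m p \/ beta (widen j) ord_max = ideal m q)
  (xs_gen : generates (splines alpha) xs) (xs_free : pfree xs)
  (alpha_sub_p : forall f a b, f \in splines alpha -> f a - f b \in ideal m p).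

Let alpha_ideal a b : a != b -> exists d, alpha a b = ideal m d.
Proof. by case/alpha_pq => ->; eexists. Qed.

Let star_ideal j : exists d, beta (widen j) ord_max = ideal m d.
Proof. by case: (star_pq j) => ->; eexists. Qed.

Let restrict_span F : F \in splines beta -> in_span xs (restrict F).
Proof. by move/(restrict_spline beta_widen); case/generatesP: xs_gen => _; apply. Qed.

Let extend_spline_p c x : x \in xs ->
    (forall j, j != c -> beta (widen j) ord_max = ideal m p) ->
  extend c x \in splines beta.
Proof.
move=> x_in star_p; have xS : x \in splines alpha by case: xs_gen => /(_ x x_in).
apply: extend_spline => // j; case: (eqVneq j c) => [->|jc]; last by rewrite star_p ?alpha_sub_p.
by rewrite subrr; have [d ->] := star_ideal c; apply: ideal0.
Qed.

Lemma rk_add_star_p : (0 < n)%N -> (forall j, beta (widen j) ord_max \subset ideal m p) ->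
  rk (splines beta) = (size xs).+1.
Proof.
move=> n_gt0 star_sub; pose c := Ordinal n_gt0.
have star_p j : beta (widen j) ord_max = ideal m p.
  by apply: label_subset_ideal; rewrite ?inE ?eqxx.
rewrite (@rk_pfree _ _ (delta_last p%:R :: map (extend c) xs)) /= ?size_map //; last first.
  exact: pfree_delta_last_cons.
apply/generatesP; split=> [_ /predU1P[->|/mapP[x x_in ->]]|F FS].
- by apply: delta_last_spline => // j; rewrite star_p; apply/idealP; exists 1; rewrite mulr1.
- exact: extend_spline_p.
have /idealP[y yE] : F ord_max - F (widen c) \in ideal m p by rewrite -(star_p c) spline_star_edge.
apply: (@in_span_cons _ _ _ (val y)%:Z).
have {}yE : F ord_max - F (widen c) = p%:R *~ (val y)%:Z.
  by rewrite yE -[y in LHS]natr_Zp mulr_natr pmulrn.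
rewrite {1}(extend_restrict c F) yE -delta_lastMz addrK.
exact/in_span_raddf/restrict_span.
Qed.

Lemma rk_add_star_q j0 : (1 < n)%N -> beta (widen j0) ord_max \subset ideal m q ->
    (forall j, j != j0 -> beta (widen j) ord_max \subset ideal m p) ->
  rk (splines beta) = size xs.
Proof.
move=> n_gt1 star_sub_q star_sub_p.
have star_q : beta (widen j0) ord_max = ideal m q.
  by apply: label_subset_ideal; rewrite ?inE ?eqxx ?orbT.
have star_p j : j != j0 -> beta (widen j) ord_max = ideal m p.
  by move=> jj0; apply: label_subset_ideal; rewrite ?inE ?eqxx ?star_sub_p.
have [j1 j1j0] : exists j1 : 'I_n, j1 != j0.
  pose o0 : 'I_n := Ordinal (ltnW n_gt1); pose o1 : 'I_n := Ordinal n_gt1.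
  by case: (eqVneq j0 o0) => [->|]; [exists o1; rewrite -val_eqE | exists o0; rewrite eq_sym].
rewrite (@rk_pfree _ _ (map (extend j0) xs)) ?size_map //; last exact: pfree_map_extend.
apply/generatesP; split=> [_ /mapP[x x_in ->]|F FS]; first exact: extend_spline_p.
have FE : F ord_max = F (widen j0).
  apply/eqP; rewrite -subr_eq0; apply/eqP/idealI_pq; last by rewrite -star_q spline_star_edge.
  rewrite -(subrK (F (widen j1)) (F ord_max)) -addrA idealD //.
    by rewrite -(star_p j1) ?spline_star_edge.
  by have := alpha_sub_p j1 j0 (restrict_spline beta_widen FS); rewrite !ffunE.
rewrite (extend_restrict j0 F) FE subrr delta_last0 addr0.
exact/in_span_raddf/restrict_span.
Qed.

End Star.

End ModPQ.


Theorem mainTheorem10 (p q m n i : nat) (alpha : labeling n m)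
    (beta : labeling n.+1 m) (gens : seq (vec n m)) :
  prime p -> prime q -> p != q -> m = (p * q)%N ->
  (* (K_n, alpha): every edge labeled by <p> or <q>, labels symmetric *)
  (forall a b : 'I_n, a != b -> alpha a b = ideal m p \/ alpha a b = ideal m q) ->
  (forall a b : 'I_n, alpha a b = alpha b a) ->
  (* (K_{n+1}, beta): keeps the labels of K_n; v_{n+1} = ord_max *)
  (forall a b : 'I_n,
     beta (widen_ord (leqnSn n) a) (widen_ord (leqnSn n) b) = alpha a b) ->
  (forall a b : 'I_n.+1, beta a b = beta b a) ->
  (forall j : 'I_n, beta (widen_ord (leqnSn n) j) ord_max = ideal m p \/
                    beta (widen_ord (leqnSn n) j) ord_max = ideal m q) ->
  (* minimum generating set: (1,...,1) and i-1 flow-ups with entries in <p> *)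
  (1 < i <= n)%N -> size gens = i.-1 ->
  min_generating (splines alpha) (ones n m :: gens) ->
  (forall g, g \in gens ->
     (exists k : 'I_n, flow_up g k) /\ forall v : 'I_n, g v \in ideal m p) ->
  ((forall j : 'I_n, beta (widen_ord (leqnSn n) j) ord_max \subset ideal m p) ->
     rk (splines beta) = (rk (splines alpha)).+1)
  /\
  ((exists j0 : 'I_n,
      beta (widen_ord (leqnSn n) j0) ord_max \subset ideal m q /\
      forall j : 'I_n, j != j0 ->
        beta (widen_ord (leqnSn n) j) ord_max \subset ideal m p) ->
     rk (splines beta) = rk (splines alpha)).
Proof.
move=> p_pr q_pr pq_neq mE; subst m.
move=> alpha_pq _ beta_widen beta_sym star_pq /andP[i_gt1 i_le_n] _ mingen gens_flow.
have gens_p g : g \in gens -> forall v, g v \in ideal (p * q) p by case/gens_flow.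
have n_gt1 : (1 < n)%N := leq_trans i_gt1 i_le_n.
have xs_free := pfree_min_generating p_pr q_pr pq_neq (ltnW n_gt1) mingen gens_p.
have alpha_sub_p f a b : f \in splines alpha -> f a - f b \in ideal (p * q) p.
  exact: generates_ones_diff_ideal mingen.1 gens_p.
rewrite (rk_pfree p_pr q_pr mingen.1 xs_free); split=> [sub_p | [j0 [sub_q sub_p]]].
- exact: (rk_add_star_p p_pr q_pr pq_neq beta_widen beta_sym alpha_pq star_pq mingen.1
    xs_free alpha_sub_p (ltnW n_gt1) sub_p).
- exact: (rk_add_star_q p_pr q_pr pq_neq beta_widen beta_sym star_pq mingen.1
    xs_free alpha_sub_p n_gt1 sub_q sub_p).
Qed.
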